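(* The attraction basin $\mathcal A$ of $x_0$ is invariant under the auxiliary flow: if $x\in\mathcal A$ and $(x,t)\in D_\Phi$ then $\Phi(x,t)\in\mathcal A$. The boundary $\partial\mathcal A$ of $\mathcal A$ relative to $D$ is also invariant in the same sense. Moreover, for every $x\in\partial\mathcal A$ the trajectory through $x$ is not global in the future.
   Context: Standing setting: $X,Y$ are real Banach spaces, $D\subseteq X$ is a nonempty open connected set, $f:D\to Y$ is a local homeomorphism (every point has an open neighbourhood mapped homeomorphically onto an open set), $x_0\in D$, $y_0=f(x_0)$. A flow in $D$ is a map $\Phi:D_\Phi\to D$ such that: (i) $D_\Phi$ is an open subset of $D\times\mathbb R$ and $\Phi$ is continuous; (ii) for each $x\in D$, $\{t:(x,t)\in D_\Phi\}$ is an interval containing $0$; (iii) $\Phi(x,0)=x$; (iv) if $(x,t_1),(x,t_1+t_2)\in D_\Phi$ then $(\Phi(x,t_1),t_2)\in D_\Phi$ and $\Phi(\Phi(x,t_1),t_2)=\Phi(x,t_1+t_2)$. The trajectory through $x$ is global in the future if $\{x\}\times[0,+\infty)\subseteq D_\Phi$. Let $\Psi(y,t)=y_0+e^{-t}(y-y_0)$ for $y\in Y,t\in\mathbb R$. The auxiliary flow $\Phi$ is the unique flow in $D$ of maximal domain with $f(\Phi(x,t))=\Psi(f(x),t)$ for all $(x,t)\in D_\Phi$; for each $x$, $t\mapsto\Phi(x,t)$ is the maximal continuous lifting by $f$ of $t\mapsto\Psi(f(x),t)$ through $x$ at $t=0$. The attraction basin $\mathcal A$ of $x_0$ is the set of $x\in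 D$ whose trajectory is global in the future and satisfies $\Phi(x,t)\to x_0$ as $t\to+\infty$. *)

From Stdlib Require Import Reals.
Open Scope R_scope.

Record Banach := {
  bcar :> Type;
  bzero : bcar;
  badd : bcar -> bcar -> bcar;
  bopp : bcar -> bcar;
  bscal : R -> bcar -> bcar;
  bnorm : bcar -> R;
  badd_assoc : forall x y z, badd x (badd y z) = badd (badd x y) z;
  badd_comm : forall x y, badd x y = badd y x;
  badd_zero : forall x, badd x bzero = x;
  badd_opp : forall x, badd x (bopp x) = bzero;
  bscal_assoc : forall a b x, bscal a (bscal b x) = bscal (a * b) x;
  bscal_one : forall x, bscal 1 x = x;
  bscal_distr_l : forall a x y, bscal a (badd x y) = badd (bscal a x) (bscal a y);
  bscal_distr_r : forall a b x, bscal (a + b) x = badd (bscal a x) (bscal b x);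
  bnorm_sep : forall x, bnorm x = 0 -> x = bzero;
  bnorm_scal : forall a x, bnorm (bscal a x) = Rabs a * bnorm x;
  bnorm_triangle : forall x y, bnorm (badd x y) <= bnorm x + bnorm y;
  bcomplete : forall u : nat -> bcar,
    (forall eps, eps > 0 -> exists N, forall m n, (m >= N)%nat -> (n >= N)%nat ->
        bnorm (badd (u m) (bopp (u n))) < eps) ->
    exists l, forall eps, eps > 0 -> exists N, forall n, (n >= N)%nat ->
        bnorm (badd (u n) (bopp l)) < eps
}.

Arguments bzero {_}. Arguments badd {_}. Arguments bopp {_}.
Arguments bscal {_}. Arguments bnorm {_}.

Definition dist {X : Banach} (x y : X) : R := bnorm (badd x (bopp y)).

Definition is_open {X : Banach} (U : X -> Prop) : Prop :=
  forall x, U x -> exists eps, eps > 0 /\ forall z, dist z x < eps -> U z.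

Definition is_open_XR {X : Banach} (W : X -> R -> Prop) : Prop :=
  forall x t, W x t -> exists eps, eps > 0 /\
    forall z s, dist z x < eps -> Rabs (s - t) < eps -> W z s.

Definition connected {X : Banach} (D : X -> Prop) : Prop :=
  forall U V : X -> Prop, is_open U -> is_open V ->
    (forall x, D x -> U x \/ V x) ->
    (forall x, D x -> U x -> V x -> False) ->
    (forall x, D x -> U x) \/ (forall x, D x -> V x).

Definition cont_on {X Y : Banach} (S : X -> Prop) (g : X -> Y) : Prop :=
  forall x, S x -> forall eps, eps > 0 -> exists delta, delta > 0 /\
    forall z, S z -> dist z x < delta -> dist (g z) (g x) < eps.

Definition local_homeo {X Y : Banach} (D : X -> Prop) (f : X -> Y) : Prop :=
  forall x, D x -> exists (U : X -> Prop) (V : Y -> Prop) (g : Y -> X),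
    is_open U /\ U x /\ (forall z, U z -> D z) /\ is_open V /\
    (forall z, U z -> V (f z)) /\ (forall y, V y -> U (g y)) /\
    (forall z, U z -> g (f z) = z) /\ (forall y, V y -> f (g y) = y) /\
    cont_on U f /\ cont_on V g.

(* Flow in D: Phi is only meaningful on its domain DPhi. *)
Definition is_flow {X : Banach} (D : X -> Prop)
    (DPhi : X -> R -> Prop) (Phi : X -> R -> X) : Prop :=
  (forall x t, DPhi x t -> D x) /\
  (forall x t, DPhi x t -> D (Phi x t)) /\
  is_open_XR DPhi /\
  (forall x t, DPhi x t -> forall eps, eps > 0 -> exists delta, delta > 0 /\
     forall z s, DPhi z s -> dist z x < delta -> Rabs (s - t) < delta ->
       dist (Phi z s) (Phi x t) < eps) /\
  (forall x, D x -> DPhi x 0) /\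
  (forall x t1 t2 s, DPhi x t1 -> DPhi x t2 -> t1 <= s <= t2 -> DPhi x s) /\
  (forall x, D x -> Phi x 0 = x) /\
  (forall x t1 t2, DPhi x t1 -> DPhi x (t1 + t2) ->
     DPhi (Phi x t1) t2 /\ Phi (Phi x t1) t2 = Phi x (t1 + t2)).

Definition Psi {Y : Banach} (y0 : Y) (y : Y) (t : R) : Y :=
  badd y0 (bscal (exp (- t)) (badd y (bopp y0))).

Definition interval0 (J : R -> Prop) : Prop :=
  J 0 /\ forall a b s, J a -> J b -> a <= s <= b -> J s.

(* The auxiliary flow: a flow in D with f(Phi(x,t)) = Psi(f x, t) on its
   domain, and such that for each x, t |-> Phi(x,t) is the maximal
   continuous lifting of t |-> Psi(f x, t) through x at t = 0: every
   continuous lifting defined on an interval containing 0 is defined on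
   a sub-interval of the trajectory domain. *)
Definition aux_flow {X Y : Banach} (D : X -> Prop) (f : X -> Y) (y0 : Y)
    (DPhi : X -> R -> Prop) (Phi : X -> R -> X) : Prop :=
  is_flow D DPhi Phi /\
  (forall x t, DPhi x t -> f (Phi x t) = Psi y0 (f x) t) /\
  (forall x, D x -> forall (J : R -> Prop) (gam : R -> X),
     interval0 J -> gam 0 = x ->
     (forall t, J t -> D (gam t)) ->
     (forall t, J t -> forall eps, eps > 0 -> exists delta, delta > 0 /\
        forall s, J s -> Rabs (s - t) < delta -> dist (gam s) (gam t) < eps) ->
     (forall t, J t -> f (gam t) = Psi y0 (f x) t) ->
     forall t, J t -> DPhi x t).

Definition global_future {X : Banach} (DPhi : X -> R -> Prop) (x : X) : Prop :=
  forall t, 0 <= t -> DPhi x t.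

Definition attraction_basin {X : Banach} (D : X -> Prop)
    (DPhi : X -> R -> Prop) (Phi : X -> R -> X) (x0 : X) (x : X) : Prop :=
  D x /\ global_future DPhi x /\
  forall eps, eps > 0 -> exists T, forall t, t >= T -> dist (Phi x t) x0 < eps.

Definition rel_boundary {X : Banach} (D A : X -> Prop) (x : X) : Prop :=
  D x /\
  (forall eps, eps > 0 -> exists a, A a /\ dist a x < eps) /\
  (forall eps, eps > 0 -> exists z, D z /\ ~ A z /\ dist z x < eps).

(* Invariance of the basin A and of its boundary comes from the flow property
   and from maximality of liftings, which continues a trajectory through any
   later point of it.  For the last claim, let B be a ball around f x0 on
   which the local inverse g of f at x0 is defined, and call sheet the points
   z over B with g (f z) = z.  Psi contracts towards f x0, so the lifting
   through a point of the sheet is g o Psi: global and tending to x0, hence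
   the sheet lies in A, and A is open.  Conversely, the sheet being open and
   closed over B, a trajectory of A starting over B stays in the sheet.  A
   boundary point with a global trajectory is carried over B into the closure
   of A over B, i.e. into the sheet, hence into the open set A: impossible. *)

From Pilot Require Import Defs.
From Stdlib Require Import Reals Lra Classical.
Open Scope R_scope.

(* [Reals] also exports a [dist]. *)
Local Notation dist := Defs.dist.

Section NormedSpace.
Context {X : Banach}.
Implicit Types (x y u v : X) (c : R).

Lemma badd_0_l x : badd bzero x = x.
Proof. rewrite badd_comm; apply badd_zero. Qed.

Lemma bopp_unique x y : badd x y = bzero -> y = bopp x.
Proof.
  intro H. rewrite <- (badd_zero _ y), <- (badd_opp _ x), badd_assoc.
  rewrite (badd_comm _ y x), H. apply badd_0_l.
Qed.

Lemma bscal_0_l x : bscal 0 x = bzero.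
Proof.
  assert (H : bscal 0 x = badd (bscal 0 x) (bscal 0 x)).
  { rewrite <- bscal_distr_r. f_equal. ring. }
  assert (H2 : badd (bscal 0 x) (bopp (bscal 0 x)) = bzero) by apply badd_opp.
  rewrite H in H2 at 1. rewrite <- badd_assoc, badd_opp, badd_zero in H2. exact H2.
Qed.

Lemma bopp_bscal c x : bopp (bscal c x) = bscal (- c) x.
Proof.
  symmetry. apply bopp_unique.
  rewrite <- bscal_distr_r, Rplus_opp_r. apply bscal_0_l.
Qed.

Lemma bopp_eq_bscal x : bopp x = bscal (-1) x.
Proof. rewrite <- (bscal_one _ x) at 1. apply bopp_bscal. Qed.

Lemma bnorm_opp x : bnorm (bopp x) = bnorm x.
Proof. rewrite bopp_eq_bscal, bnorm_scal, Rabs_left by lra. ring. Qed.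

Lemma bnorm_0 : bnorm (@bzero X) = 0.
Proof. rewrite <- (bscal_0_l bzero), bnorm_scal, Rabs_R0. ring. Qed.

Lemma bnorm_nonneg x : 0 <= bnorm x.
Proof.
  pose proof (bnorm_triangle _ x (bopp x)) as H.
  rewrite badd_opp, bnorm_0, bnorm_opp in H. lra.
Qed.

Lemma bopp_add x y : bopp (badd x y) = badd (bopp x) (bopp y).
Proof. rewrite !bopp_eq_bscal. apply bscal_distr_l. Qed.

Lemma bopp_involutive x : bopp (bopp x) = x.
Proof. symmetry. apply bopp_unique. rewrite badd_comm. apply badd_opp. Qed.

Lemma badd_sub_cancel_l x u : badd (badd x u) (bopp x) = u.
Proof. rewrite (badd_comm _ x u), <- badd_assoc, badd_opp, badd_zero. reflexivity. Qed.

Lemma badd_sub_l x u v : badd (badd x u) (bopp (badd x v)) = badd u (bopp v).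
Proof.
  rewrite bopp_add, badd_assoc. f_equal.
  rewrite (badd_comm _ x u), <- badd_assoc, badd_opp, badd_zero. reflexivity.
Qed.

Lemma dist_sym x y : dist x y = dist y x.
Proof.
  unfold dist. rewrite <- bnorm_opp, bopp_add, bopp_involutive, badd_comm.
  reflexivity.
Qed.

Lemma dist_triangle x y u : dist x u <= dist x y + dist y u.
Proof.
  unfold dist. eapply Rle_trans; [|apply bnorm_triangle].
  right. f_equal. rewrite <- badd_assoc. f_equal.
  rewrite badd_assoc, (badd_comm _ (bopp y) y), badd_opp, badd_0_l. reflexivity.
Qed.

Lemma dist_refl x : dist x x = 0.
Proof. unfold dist. rewrite badd_opp. apply bnorm_0. Qed.

Lemma dist_nonneg x y : 0 <= dist x y.
Proof. apply bnorm_nonneg. Qed.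

Lemma dist_small_eq x y : (forall eps, eps > 0 -> dist x y < eps) -> x = y.
Proof.
  intro H. destruct (Rle_lt_or_eq_dec 0 _ (dist_nonneg x y)) as [Hpos|Hzero].
  - specialize (H _ Hpos). lra.
  - unfold dist in Hzero. symmetry in Hzero.
    apply bnorm_sep, bopp_unique in Hzero.
    rewrite <- (bopp_involutive x), <- Hzero. apply bopp_involutive.
Qed.

End NormedSpace.

Definition continuous_within {X : Banach} (gam : R -> X) (J : R -> Prop) (t : R) :
  Prop :=
  forall eps, eps > 0 -> exists d, d > 0 /\
    forall s, J s -> Rabs (s - t) < d -> dist (gam s) (gam t) < eps.

Lemma continuous_within_paste {X : Banach} (gam : R -> X) (J : R -> Prop) T u :
  (u <= T -> continuous_within gam (fun s => J s /\ s <= T) u) ->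
  (T <= u -> continuous_within gam (fun s => J s /\ T <= s) u) ->
  continuous_within gam J u.
Proof.
  intros Hleft Hright eps He.
  destruct (total_order_T u T) as [[Hlt|Heq]|Hgt].
  - destruct (Hleft (Rlt_le _ _ Hlt) eps He) as [d [Hd H]].
    exists (Rmin d (T - u)). split; [apply Rmin_glb_lt; lra|].
    intros s Hs Hsu. pose proof (Rmin_l d (T - u)). pose proof (Rmin_r d (T - u)).
    pose proof (Rabs_def2 _ _ Hsu). apply H; [split|]; [exact Hs|lra|lra].
  - subst u.
    destruct (Hleft (Rle_refl T) eps He) as [d1 [Hd1 H1]].
    destruct (Hright (Rle_refl T) eps He) as [d2 [Hd2 H2]].
    exists (Rmin d1 d2). split; [apply Rmin_glb_lt; lra|].
    intros s Hs Hsu. pose proof (Rmin_l d1 d2). pose proof (Rmin_r d1 d2).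
    destruct (Rle_dec s T).
    + apply H1; [split|]; [exact Hs|lra|lra].
    + apply H2; [split|]; [exact Hs|lra|lra].
  - destruct (Hright (Rlt_le _ _ Hgt) eps He) as [d [Hd H]].
    exists (Rmin d (u - T)). split; [apply Rmin_glb_lt; lra|].
    intros s Hs Hsu. pose proof (Rmin_l d (u - T)). pose proof (Rmin_r d (u - T)).
    pose proof (Rabs_def2 _ _ Hsu). apply H; [split|]; [exact Hs|lra|lra].
Qed.

Definition clopen_in (a b : R) (P : R -> Prop) : Prop :=
  (forall t, a <= t <= b -> P t ->
     exists d, d > 0 /\ forall s, a <= s <= b -> Rabs (s - t) < d -> P s) /\
  (forall t, a <= t <= b ->
     (forall d, d > 0 -> exists s, a <= s <= b /\ Rabs (s - t) < d /\ P s) -> P t).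

Lemma clopen_in_right a b P : a <= b -> clopen_in a b P -> P a -> P b.
Proof.
  intros Hab [Hopen Hclosed] Pa.
  set (E := fun s => a <= s <= b /\ forall u, a <= u <= s -> P u).
  assert (Ea : E a).
  { split; [lra|]. intros u Hu. replace u with a by lra. exact Pa. }
  destruct (completeness E) as [c [Hub Hlub]].
  { exists b. intros s [Hs _]. lra. }
  { exists a. exact Ea. }
  assert (Hac : a <= c) by (apply Hub, Ea).
  assert (Hcb : c <= b) by (apply Hlub; intros s [Hs _]; lra).
  assert (Hbelow : forall u, a <= u < c -> P u).
  { intros u Hu. apply NNPP. intro Hnu.
    assert (c <= u); [|lra].
    apply Hlub. intros s [Hs HP]. apply Rnot_lt_le. intro Hus. apply Hnu, HP. lra. }
  assert (Pc : P c).
  { apply Hclosed; [lra|]. intros d Hd. destruct (Req_dec c a) as [Hca|Hca].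
    - exists a. rewrite Hca, Rminus_diag, Rabs_R0. split; [lra|]. split; [lra|exact Pa].
    - assert (a < c) by (destruct Hac; [assumption|congruence]).
      pose proof (Rmax_r a (c - d / 2)).
      assert (a <= Rmax a (c - d / 2) < c) by (split; [apply Rmax_l|apply Rmax_lub_lt; lra]).
      set (s := Rmax a (c - d / 2)) in *.
      exists s. split; [lra|]. split; [rewrite Rabs_left; lra|]. apply Hbelow. lra. }
  destruct (Req_dec c b) as [<-|Hcb']; [exact Pc|].
  destruct (Hopen c ltac:(lra) Pc) as [d [Hd Hnear]].
  pose proof (Rmin_l b (c + d / 2)). pose proof (Rmin_r b (c + d / 2)).
  assert (Hcs : c < Rmin b (c + d / 2)) by (apply Rmin_glb_lt; lra).
  set (s := Rmin b (c + d / 2)) in *.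
  assert (Es : E s).
  { split; [lra|]. intros u Hu. destruct (Rlt_le_dec u c).
    - apply Hbelow. lra.
    - apply Hnear; [lra|]. rewrite Rabs_right; lra. }
  pose proof (Hub s Es). lra.
Qed.

Lemma clopen_in_left a b P : a <= b -> clopen_in a b P -> P b -> P a.
Proof.
  intros Hab [Hopen Hclosed] Pb.
  assert (Hrefl : forall s t, Rabs (a + b - s - (a + b - t)) = Rabs (s - t)).
  { intros s t. rewrite <- Rabs_Ropp. f_equal. ring. }
  replace a with (a + b - b) by ring.
  apply (clopen_in_right a b (fun s => P (a + b - s)) Hab).
  - split.
    + intros t Ht Pt. destruct (Hopen (a + b - t) ltac:(lra) Pt) as [d [Hd H]].
      exists d. split; [exact Hd|]. intros s Hs Hst. apply H; [lra|].
      rewrite Hrefl. exact Hst.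
    + intros t Ht H. apply Hclosed; [lra|]. intros d Hd.
      destruct (H d Hd) as [s [Hs [Hst Ps]]].
      exists (a + b - s). split; [lra|]. rewrite Hrefl. split; assumption.
  - replace (a + b - a) with b by ring. exact Pb.
Qed.

Section Psi.
Context {Y : Banach} (y0 : Y).
Implicit Types (y : Y) (s t : R).

Lemma Psi_sub_center y t :
  badd (Psi y0 y t) (bopp y0) = bscal (exp (- t)) (badd y (bopp y0)).
Proof. apply badd_sub_cancel_l. Qed.

Lemma dist_Psi_center y t : dist (Psi y0 y t) y0 = exp (- t) * dist y y0.
Proof.
  unfold dist. rewrite Psi_sub_center, bnorm_scal, Rabs_right; [reflexivity|].
  left. apply exp_pos.
Qed.

Lemma dist_Psi_center_le y t : 0 <= t -> dist (Psi y0 y t) y0 <= dist y y0.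
Proof.
  intro Ht. rewrite dist_Psi_center.
  assert (exp (- t) <= 1).
  { rewrite <- exp_0. destruct (Req_dec t 0) as [->|]; [rewrite Ropp_0; lra|].
    left. apply exp_increasing. lra. }
  pose proof (dist_nonneg y y0). pose proof (exp_pos (- t)). nra.
Qed.

Lemma Psi_0 y : Psi y0 y 0 = y.
Proof.
  unfold Psi. rewrite Ropp_0, exp_0, bscal_one, badd_comm, <- badd_assoc.
  rewrite (badd_comm _ (bopp y0)), badd_opp, badd_zero. reflexivity.
Qed.

Lemma Psi_add y s t : Psi y0 (Psi y0 y s) t = Psi y0 y (s + t).
Proof.
  unfold Psi at 1. rewrite Psi_sub_center, bscal_assoc, <- exp_plus.
  unfold Psi. do 3 f_equal. ring.
Qed.

Lemma dist_Psi_Psi y s t :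
  dist (Psi y0 y s) (Psi y0 y t) = Rabs (exp (- s) - exp (- t)) * dist y y0.
Proof.
  unfold dist, Psi.
  rewrite badd_sub_l, bopp_bscal, <- bscal_distr_r, bnorm_scal. reflexivity.
Qed.

Lemma Psi_continuous y t : continuous_within (Psi y0 y) (fun _ => True) t.
Proof.
  intros eps He. pose proof (dist_nonneg y y0) as HM. set (M := dist y y0) in *.
  assert (Hc : continuity_pt (fun s => exp (- s)) t).
  { apply (continuity_pt_comp Ropp exp).
    - apply continuity_pt_opp, derivable_continuous_pt, derivable_pt_id.
    - apply derivable_continuous, derivable_exp. }
  destruct (Hc (eps / (M + 1))) as [d [Hd H]].
  { apply Rdiv_lt_0_compat; lra. }
  exists d. split; [exact Hd|]. intros s _ Hst.
  rewrite dist_Psi_Psi. fold M.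
  assert (Hexp : Rabs (exp (- s) - exp (- t)) < eps / (M + 1)).
  { destruct (Req_dec s t) as [->|Hne].
    - rewrite Rminus_diag, Rabs_R0. apply Rdiv_lt_0_compat; lra.
    - apply (H s). split; [split; [exact I|auto]|exact Hst]. }
  apply (Rmult_lt_compat_r (M + 1)) in Hexp; [|lra].
  unfold Rdiv in Hexp. rewrite Rmult_assoc, Rinv_l in Hexp by lra.
  pose proof (Rabs_pos (exp (- s) - exp (- t))). nra.
Qed.

Lemma Psi_tends_to_center y delta : delta > 0 ->
  exists T, 0 <= T /\ forall t, t >= T -> dist (Psi y0 y t) y0 < delta.
Proof.
  intro Hdel. pose proof (dist_nonneg y y0) as HM. set (M := dist y y0) in *.
  set (q := delta / (M + 1)).
  assert (Hq : 0 < q) by (apply Rdiv_lt_0_compat; lra).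
  exists (Rmax 0 (- ln q)). split; [apply Rmax_l|]. intros t Ht.
  pose proof (Rmax_r 0 (- ln q)).
  assert (exp (- t) <= q).
  { rewrite <- (exp_ln q Hq). destruct (Req_dec (- t) (ln q)) as [->|Hne]; [lra|].
    left. apply exp_increasing. lra. }
  assert (q * M < delta).
  { unfold q. apply (Rmult_lt_reg_r (M + 1)); [lra|]. field_simplify; lra. }
  rewrite dist_Psi_center. fold M. pose proof (exp_pos (- t)). nra.
Qed.

End Psi.

Section Flow.
Context {X : Banach} {D : X -> Prop} {DPhi : X -> R -> Prop} {Phi : X -> R -> X}.
Hypothesis Hflow : is_flow D DPhi Phi.

Lemma flow_dom_D x t : DPhi x t -> D x.
Proof. apply Hflow. Qed.

Lemma flow_D x t : DPhi x t -> D (Phi x t).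
Proof. apply Hflow. Qed.

Lemma flow_dom_0 x : D x -> DPhi x 0.
Proof. apply Hflow. Qed.

Lemma flow_dom_between x t1 t2 s : DPhi x t1 -> DPhi x t2 -> t1 <= s <= t2 -> DPhi x s.
Proof. apply Hflow. Qed.

Lemma flow_0 x : D x -> Phi x 0 = x.
Proof. apply Hflow. Qed.

Lemma flow_add x t1 t2 : DPhi x t1 -> DPhi x (t1 + t2) ->
  DPhi (Phi x t1) t2 /\ Phi (Phi x t1) t2 = Phi x (t1 + t2).
Proof. apply Hflow. Qed.

Lemma flow_continuous_time x t : DPhi x t -> continuous_within (Phi x) (DPhi x) t.
Proof.
  intros Hxt eps He. destruct Hflow as [_ [_ [_ [Hcont _]]]].
  destruct (Hcont x t Hxt eps He) as [d [Hd H]].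
  exists d. split; [exact Hd|]. intros s Hs Hst. apply H; auto.
  rewrite dist_refl. lra.
Qed.

Lemma flow_continuous_point x t eps : DPhi x t -> eps > 0 ->
  exists d, d > 0 /\ forall z, dist z x < d -> DPhi z t /\ dist (Phi z t) (Phi x t) < eps.
Proof.
  intros Hxt He. destruct Hflow as [_ [_ [Hopen [Hcont _]]]].
  destruct (Hcont x t Hxt eps He) as [d1 [Hd1 H1]].
  destruct (Hopen x t Hxt) as [d2 [Hd2 H2]].
  exists (Rmin d1 d2). split; [apply Rmin_glb_lt; lra|].
  intros z Hz. pose proof (Rmin_l d1 d2). pose proof (Rmin_r d1 d2).
  assert (Hzero : Rabs (t - t) < Rmin d1 d2)
    by (rewrite Rminus_diag, Rabs_R0; apply Rmin_glb_lt; lra).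
  assert (DPhi z t) by (apply H2; lra).
  split; [assumption|]. apply H1; auto; lra.
Qed.

Context {x0 : X}.
Local Notation basin := (attraction_basin D DPhi Phi x0).

Lemma basin_flow_invariant x t : basin x -> DPhi x t -> basin (Phi x t).
Proof.
  intros [Dx [Hg Hconv]] Hxt.
  assert (Hshift : forall s, 0 <= s -> DPhi x (t + s) /\ Phi (Phi x t) s = Phi x (t + s)).
  { intros s Hs. assert (Hts : DPhi x (t + s)).
    { destruct (Rle_dec 0 (t + s)); [apply Hg; lra|].
      apply (flow_dom_between x t 0); auto using flow_dom_0. lra. }
    split; [exact Hts|]. apply flow_add; assumption. }
  split; [apply flow_D, Hxt|]. split.
  - intros s Hs. apply (flow_add x t s Hxt), Hshift, Hs.
  - intros eps He. destruct (Hconv eps He) as [T HT]. exists (Rmax (T - t) 0).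
    intros s Hs. pose proof (Rmax_l (T - t) 0). pose proof (Rmax_r (T - t) 0).
    rewrite (proj2 (Hshift s ltac:(lra))). apply HT. lra.
Qed.

End Flow.

Section AuxFlow.
Context {X Y : Banach} {D : X -> Prop} {f : X -> Y} {y0 : Y}
  {DPhi : X -> R -> Prop} {Phi : X -> R -> X}.
Hypothesis Hax : aux_flow D f y0 DPhi Phi.

Let Hflow : is_flow D DPhi Phi := proj1 Hax.

Lemma flow_lift x t : DPhi x t -> f (Phi x t) = Psi y0 (f x) t.
Proof. apply Hax. Qed.

Lemma lifting_in_flow_domain x (J : R -> Prop) (gam : R -> X) :
  D x -> interval0 J -> gam 0 = x -> (forall t, J t -> D (gam t)) ->
  (forall t, J t -> continuous_within gam J t) ->
  (forall t, J t -> f (gam t) = Psi y0 (f x) t) ->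
  forall t, J t -> DPhi x t.
Proof. intros Dx. apply Hax, Dx. Qed.

Lemma dist_flow_lift_le x t : DPhi x t -> 0 <= t -> dist (f (Phi x t)) y0 <= dist (f x) y0.
Proof. intros Hxt Ht. rewrite flow_lift by exact Hxt. apply dist_Psi_center_le, Ht. Qed.

(* The concatenation of the trajectory of z up to time T with the global
   trajectory of Phi z T is a lifting, so maximality extends the domain. *)
Lemma global_future_of_image z T :
  DPhi z T -> 0 <= T -> global_future DPhi (Phi z T) -> global_future DPhi z.
Proof.
  intros HzT HT Hw. set (w := Phi z T) in *.
  assert (Dz : D z) by exact (flow_dom_D Hflow z T HzT).
  assert (Hzs : forall s, 0 <= s <= T -> DPhi z s)
    by (intros s Hs; exact (flow_dom_between Hflow z 0 T s (flow_dom_0 Hflow z Dz) HzT Hs)).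
  set (gam := fun s => if Rle_dec s T then Phi z s else Phi w (s - T)).
  assert (Hleft : forall s, s <= T -> gam s = Phi z s)
    by (intros s Hs; unfold gam; destruct (Rle_dec s T); [reflexivity|lra]).
  assert (Hright : forall s, T <= s -> gam s = Phi w (s - T)).
  { intros s Hs. unfold gam. destruct (Rle_dec s T); [|reflexivity].
    replace s with T by lra.
    rewrite Rminus_diag, (flow_0 Hflow w (flow_D Hflow z T HzT)). reflexivity. }
  intros t Ht.
  apply (lifting_in_flow_domain z (fun s => 0 <= s) gam Dz); auto.
  - split; [lra|]. intros; lra.
  - rewrite Hleft by exact HT. apply (flow_0 Hflow), Dz.
  - intros s Hs. destruct (Rle_dec s T).
    + rewrite Hleft by lra. apply (flow_D Hflow), Hzs. lra.
    + rewrite Hright by lra. apply (flow_D Hflow), Hw. lra.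
  - intros u Hu. cbv beta in Hu. apply (continuous_within_paste gam _ T u).
    + intros HuT eps He.
      destruct (flow_continuous_time Hflow z u (Hzs u ltac:(lra)) eps He) as [d [Hd H]].
      exists d. split; [exact Hd|]. intros s [Hs HsT] Hsu.
      rewrite !Hleft by lra. apply H; [apply Hzs; lra|exact Hsu].
    + intros HTu eps He.
      destruct (flow_continuous_time Hflow w (u - T) (Hw (u - T) ltac:(lra)) eps He)
        as [d [Hd H]].
      exists d. split; [exact Hd|]. intros s [Hs HTs] Hsu.
      rewrite !Hright by lra. apply H; [apply Hw; lra|].
      replace (s - T - (u - T)) with (s - u) by ring. exact Hsu.
  - intros s Hs. destruct (Rle_dec s T).
    + rewrite Hleft by lra. apply flow_lift, Hzs. lra.
    + rewrite Hright by lra. rewrite flow_lift by (apply Hw; lra).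
      unfold w. rewrite flow_lift, Psi_add by exact HzT. f_equal. ring.
Qed.

Context {x0 : X}.
Local Notation basin := (attraction_basin D DPhi Phi x0).

Lemma basin_of_image z t : DPhi z t -> basin (Phi z t) -> basin z.
Proof.
  intros Hzt HA. assert (Dz : D z) by exact (flow_dom_D Hflow z t Hzt).
  destruct (Rle_dec 0 t) as [Ht|Ht].
  - destruct HA as [_ [Hgw Hconv]].
    assert (Hg : global_future DPhi z) by (apply (global_future_of_image z t); auto).
    split; [exact Dz|]. split; [exact Hg|].
    intros eps He. destruct (Hconv eps He) as [T HT]. exists (Rmax (T + t) 0).
    intros s Hs. pose proof (Rmax_l (T + t) 0). pose proof (Rmax_r (T + t) 0).
    destruct (flow_add Hflow z t (s - t) Hzt) as [_ Heq].
    { replace (t + (s - t)) with s by ring. apply Hg. lra. }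
    replace (t + (s - t)) with s in Heq by ring.
    rewrite <- Heq. apply HT. lra.
  - destruct (flow_add Hflow z t (- t) Hzt) as [Hd Heq].
    { rewrite Rplus_opp_r. apply (flow_dom_0 Hflow), Dz. }
    rewrite Rplus_opp_r, (flow_0 Hflow z Dz) in Heq.
    rewrite <- Heq. apply (basin_flow_invariant Hflow); assumption.
Qed.

Lemma boundary_flow_invariant x t :
  rel_boundary D basin x -> DPhi x t -> rel_boundary D basin (Phi x t).
Proof.
  intros [Dx [Hin Hout]] Hxt. split; [apply (flow_D Hflow), Hxt|]. split.
  - intros eps He. destruct (flow_continuous_point Hflow x t eps Hxt He) as [d [Hd H]].
    destruct (Hin d Hd) as [a [Aa Ha]]. destruct (H a Ha) as [Hat Hdist].
    exists (Phi a t). split; [apply (basin_flow_invariant Hflow)|]; assumption.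
  - intros eps He. destruct (flow_continuous_point Hflow x t eps Hxt He) as [d [Hd H]].
    destruct (Hout d Hd) as [z [Dz [nAz Hz]]]. destruct (H z Hz) as [Hzt Hdist].
    exists (Phi z t). split; [apply (flow_D Hflow), Hzt|]. split; [|exact Hdist].
    intro HAz. apply nAz. apply (basin_of_image z t); assumption.
Qed.

End AuxFlow.

Lemma local_homeo_continuous {X Y : Banach} (D : X -> Prop) (f : X -> Y) p eps :
  local_homeo D f -> D p -> eps > 0 ->
  exists d, d > 0 /\ forall z, dist z p < d -> dist (f z) (f p) < eps.
Proof.
  intros Hlh Dp He.
  destruct (Hlh p Dp) as [U [V [g [HUo [HUp [_ [_ [_ [_ [_ [_ [Hcf _]]]]]]]]]]]].
  destruct (HUo p HUp) as [d1 [Hd1 HU]].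
  destruct (Hcf p HUp eps He) as [d2 [Hd2 H]].
  exists (Rmin d1 d2). split; [apply Rmin_glb_lt; lra|].
  intros z Hz. pose proof (Rmin_l d1 d2). pose proof (Rmin_r d1 d2).
  apply H; [apply HU; lra|lra].
Qed.

Definition local_inverse {X Y : Banach} (D : X -> Prop) (f : X -> Y) (x0 : X)
    (U : X -> Prop) (g : Y -> X) (r : R) : Prop :=
  is_open U /\ U x0 /\ (forall z, U z -> D z) /\ (forall z, U z -> g (f z) = z) /\
  r > 0 /\ (forall y, dist y (f x0) < r -> U (g y) /\ f (g y) = y) /\
  cont_on (fun y => dist y (f x0) < r) g.

Lemma local_inverse_exists {X Y : Banach} (D : X -> Prop) (f : X -> Y) x0 :
  local_homeo D f -> D x0 -> exists U g r, local_inverse D f x0 U g r.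
Proof.
  intros Hlh Dx0.
  destruct (Hlh x0 Dx0)
    as [U [V [g [HUo [HUx0 [HUD [HVo [HfV [HgV [Hgf [Hfg [_ Hcg]]]]]]]]]]]].
  destruct (HVo (f x0) (HfV x0 HUx0)) as [r [Hr0 Hr]].
  exists U, g, r. repeat (split; [assumption|]). split.
  - intros y Hy. split; [apply HgV|apply Hfg]; apply Hr, Hy.
  - intros y Hy eps He. destruct (Hcg y (Hr y Hy) eps He) as [d [Hd H]].
    exists d. split; [exact Hd|]. intros z Hz. apply H, Hr, Hz.
Qed.

Definition local_sheet {X Y : Banach} (f : X -> Y) (x0 : X) (g : Y -> X) (r : R)
    (z : X) : Prop :=
  dist (f z) (f x0) < r /\ g (f z) = z.

Section LocalSheet.
Context {X Y : Banach} {D : X -> Prop} {f : X -> Y} {x0 : X}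
  {DPhi : X -> R -> Prop} {Phi : X -> R -> X} {U : X -> Prop} {g : Y -> X} {r : R}.
Hypothesis Hax : aux_flow D f (f x0) DPhi Phi.
Hypothesis Hlh : local_homeo D f.
Hypothesis Hinv : local_inverse D f x0 U g r.

Let Hflow : is_flow D DPhi Phi := proj1 Hax.
Local Notation sheet := (local_sheet f x0 g r).
Local Notation basin := (attraction_basin D DPhi Phi x0).

Lemma sheet_sub_U z : sheet z -> U z.
Proof. intros [Hz Hgz]. rewrite <- Hgz. apply Hinv, Hz. Qed.

Lemma sheet_D z : sheet z -> D z.
Proof. intro Hz. apply Hinv, sheet_sub_U, Hz. Qed.

Lemma sheet_center : sheet x0.
Proof.
  destruct Hinv as [_ [HUx0 [_ [Hgf [Hr0 _]]]]].
  split; [rewrite dist_refl; exact Hr0|apply Hgf, HUx0].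
Qed.

Lemma sheet_open p : sheet p -> exists e, e > 0 /\ forall z, dist z p < e -> sheet z.
Proof.
  intro Hp. pose proof (sheet_sub_U p Hp) as Up.
  destruct Hinv as [HUo [_ [HUD [Hgf _]]]]. destruct Hp as [Hfp _].
  destruct (HUo p Up) as [e1 [He1 HU]].
  destruct (local_homeo_continuous D f p (r - dist (f p) (f x0)) Hlh)
    as [e2 [He2 Hf]]; [apply HUD, Up|lra|].
  exists (Rmin e1 e2). split; [apply Rmin_glb_lt; lra|].
  intros z Hz. pose proof (Rmin_l e1 e2). pose proof (Rmin_r e1 e2).
  split; [|apply Hgf, HU; lra].
  pose proof (dist_triangle (f z) (f p) (f x0)). pose proof (Hf z ltac:(lra)). lra.
Qed.

(* g o f is continuous over the ball and is the identity on the sheet. *)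
Lemma sheet_closed p : D p -> dist (f p) (f x0) < r ->
  (forall eps, eps > 0 -> exists q, sheet q /\ dist q p < eps) -> sheet p.
Proof.
  intros Dp Hfp Happrox. split; [exact Hfp|].
  destruct Hinv as [_ [_ [_ [_ [_ [_ Hcg]]]]]].
  apply dist_small_eq. intros eps He.
  destruct (Hcg (f p) Hfp (eps / 2) ltac:(lra)) as [dg [Hdg Hg]].
  destruct (local_homeo_continuous D f p dg Hlh Dp Hdg) as [df [Hdf Hf]].
  destruct (Happrox (Rmin df (eps / 2))) as [q [[Hfq Hgq] Hq]];
    [apply Rmin_glb_lt; lra|].
  pose proof (Rmin_l df (eps / 2)). pose proof (Rmin_r df (eps / 2)).
  pose proof (Hg (f q) Hfq (Hf q ltac:(lra))) as Hgfq.
  rewrite Hgq, dist_sym in Hgfq.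
  pose proof (dist_triangle (g (f p)) q p). lra.
Qed.

Lemma sheet_trajectory_clopen z b :
  global_future DPhi z -> dist (f z) (f x0) < r ->
  clopen_in 0 b (fun s => sheet (Phi z s)).
Proof.
  intros Hg Hfz. split.
  - intros t Ht Hsheet. destruct (sheet_open _ Hsheet) as [e [He Hnear]].
    destruct (flow_continuous_time Hflow z t (Hg t ltac:(lra)) e He) as [d [Hd H]].
    exists d. split; [exact Hd|]. intros s Hs Hst. apply Hnear, H; [apply Hg; lra|exact Hst].
  - intros t Ht Happrox. apply sheet_closed.
    + apply (flow_D Hflow), Hg. lra.
    + eapply Rle_lt_trans; [apply (dist_flow_lift_le Hax), Ht|exact Hfz]. apply Hg. lra.
    + intros eps He.
      destruct (flow_continuous_time Hflow z t (Hg t ltac:(lra)) eps He) as [d [Hd H]].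
      destruct (Happrox d Hd) as [s [Hs [Hst Hsheet]]].
      exists (Phi z s). split; [exact Hsheet|]. apply H; [apply Hg; lra|exact Hst].
Qed.

Lemma sheet_sub_basin z : sheet z -> basin z.
Proof.
  intro Hz. pose proof Hinv as [_ [_ [HUD [_ [_ [Hball Hcg]]]]]].
  pose proof Hz as [Hfz Hgz].
  assert (Hpath : forall s, 0 <= s -> dist (Psi (f x0) (f z) s) (f x0) < r)
    by (intros s Hs; eapply Rle_lt_trans; [apply dist_Psi_center_le, Hs|exact Hfz]).
  assert (Hg : global_future DPhi z).
  { intros t Ht. apply (lifting_in_flow_domain Hax z (fun s => 0 <= s)
             (fun s => g (Psi (f x0) (f z) s)) (sheet_D z Hz)).
    - split; [lra|]. intros; lra.
    - rewrite Psi_0. exact Hgz.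
    - intros s Hs. apply HUD, Hball, Hpath, Hs.
    - intros u Hu eps He.
      destruct (Hcg _ (Hpath u Hu) eps He) as [dg [Hdg Hgc]].
      destruct (Psi_continuous (f x0) (f z) u dg Hdg) as [d [Hd HPsi]].
      exists d. split; [exact Hd|]. intros s Hs Hsu.
      apply Hgc; [apply Hpath, Hs|apply HPsi; trivial].
    - intros s Hs. apply Hball, Hpath, Hs.
    - exact Ht. }
  assert (Hsheet : forall t, 0 <= t -> sheet (Phi z t)).
  { intros t Ht. apply (clopen_in_right 0 t _ Ht (sheet_trajectory_clopen z t Hg Hfz)).
    rewrite (flow_0 Hflow z (sheet_D z Hz)). exact Hz. }
  split; [apply sheet_D, Hz|]. split; [exact Hg|].
  intros eps He.
  destruct (Hcg (f x0) (proj1 sheet_center) eps He) as [dg [Hdg Hgc]].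
  destruct (Psi_tends_to_center (f x0) (f z) dg Hdg) as [T [HT0 HT]].
  exists T. intros t Ht. destruct (Hsheet t ltac:(lra)) as [_ Hgt].
  rewrite <- Hgt, (flow_lift Hax) by (apply Hg; lra).
  destruct sheet_center as [_ Hgx0]. rewrite <- Hgx0 at 2.
  apply Hgc; [apply Hpath; lra|apply HT, Ht].
Qed.

Lemma basin_sub_sheet q : basin q -> dist (f q) (f x0) < r -> sheet q.
Proof.
  intros [Dq [Hg Hconv]] Hfq.
  destruct (sheet_open x0 sheet_center) as [e [He Hnear]].
  destruct (Hconv e He) as [T HT].
  pose proof (Rmax_l T 0). pose proof (Rmax_r T 0).
  rewrite <- (flow_0 Hflow q Dq).
  apply (clopen_in_left 0 (Rmax T 0) _ ltac:(lra) (sheet_trajectory_clopen q _ Hg Hfq)).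
  apply Hnear, HT. lra.
Qed.

Lemma basin_open a : basin a -> exists e, e > 0 /\ forall z, dist z a < e -> basin z.
Proof.
  intros [_ [Hg Hconv]].
  destruct (sheet_open x0 sheet_center) as [e0 [He0 Hnear0]].
  destruct (Hconv e0 He0) as [T HT].
  pose proof (Rmax_l T 0). pose proof (Rmax_r T 0). set (b := Rmax T 0) in *.
  assert (Hb : sheet (Phi a b)) by (apply Hnear0, HT; lra).
  destruct (sheet_open _ Hb) as [e1 [He1 Hnear1]].
  destruct (flow_continuous_point Hflow a b e1 (Hg b ltac:(lra)) He1) as [d [Hd Hcont]].
  exists d. split; [exact Hd|]. intros z Hz. destruct (Hcont z Hz) as [Hzb Hdist].
  apply (basin_of_image Hax z b Hzb), sheet_sub_basin, Hnear1, Hdist.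
Qed.

Lemma boundary_not_global_future x : rel_boundary D basin x -> ~ global_future DPhi x.
Proof.
  intros [Dx [Hin Hout]] Hg.
  destruct (Psi_tends_to_center (f x0) (f x) r) as [T [HT0 HT]]; [apply Hinv|].
  assert (HxT : DPhi x T) by (apply Hg; lra).
  set (p := Phi x T).
  assert (Hfp : dist (f p) (f x0) < r)
    by (unfold p; rewrite (flow_lift Hax) by exact HxT; apply HT; lra).
  assert (Hp : sheet p).
  { apply sheet_closed; [apply (flow_D Hflow), HxT|exact Hfp|]. intros eps He.
    destruct (local_homeo_continuous D f p (r - dist (f p) (f x0)) Hlh)
      as [df [Hdf Hf]]; [apply (flow_D Hflow), HxT|lra|].
    destruct (flow_continuous_point Hflow x T (Rmin eps df) HxT) as [d [Hd H]];
      [apply Rmin_glb_lt; lra|].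
    pose proof (Rmin_l eps df). pose proof (Rmin_r eps df).
    destruct (Hin d Hd) as [a [Aa Ha]]. destruct (H a Ha) as [HaT Hdist]. fold p in Hdist.
    exists (Phi a T). split; [|lra].
    apply basin_sub_sheet; [apply (basin_flow_invariant Hflow); assumption|].
    pose proof (Hf (Phi a T) ltac:(lra)).
    pose proof (dist_triangle (f (Phi a T)) (f p) (f x0)). lra. }
  assert (Ax : basin x) by exact (basin_of_image Hax x T HxT (sheet_sub_basin p Hp)).
  destruct (basin_open x Ax) as [e [He Hnear]].
  destruct (Hout e He) as [z [_ [nAz Hz]]].
  exact (nAz (Hnear z Hz)).
Qed.

End LocalSheet.

Theorem lemma2p2 (X Y : Banach) (D : X -> Prop) (f : X -> Y) (x0 : X)
    (DPhi : X -> R -> Prop) (Phi : X -> R -> X) :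
  (exists x, D x) -> is_open D -> connected D ->
  local_homeo D f -> D x0 ->
  aux_flow D f (f x0) DPhi Phi ->
  let A := attraction_basin D DPhi Phi x0 in
  (forall x t, A x -> DPhi x t -> A (Phi x t)) /\
  (forall x t, rel_boundary D A x -> DPhi x t -> rel_boundary D A (Phi x t)) /\
  (forall x, rel_boundary D A x -> ~ global_future DPhi x).
Proof.
  intros _ _ _ Hlh Dx0 Hax A.
  destruct (local_inverse_exists D f x0 Hlh Dx0) as [U [g [r Hinv]]].
  split; [|split].
  - exact (basin_flow_invariant (proj1 Hax)).
  - exact (boundary_flow_invariant Hax).
  - exact (boundary_not_global_future Hax Hlh Hinv).
Qed.
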